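(* Fix an integer $\ell\ge 1$. Then for all $p=O(n)$, $D^p(\textsc{Sub}(C_{2\ell+1}))=\tilde O(n^2/p)$.
   Context: $C_k$ is the cycle on $k$ vertices. Insertion-only streaming model: the edges of an $n$-vertex undirected input graph $G$ arrive as a stream in arbitrary order; the algorithm knows $n$, makes $p$ passes, and has $S$ bits of memory. $\textsc{Sub}(H)$: decide whether $G$ contains $H$ as a subgraph and if so output the vertex set of a copy. $D^p(\Pi)$ is the minimum space of a deterministic $p$-pass streaming algorithm solving $\Pi$. $\tilde O$ hides polylogarithmic factors in $n$. *)

From mathcomp Require Import all_boot.
Set Implicit Arguments. Unset Strict Implicit. Unset Printing Implicit Defensive.

(* An edge of the stream is an (arbitrarily oriented) pair of vertices of
   the vertex set 'I_n. *)
Definition edge (n : nat) := ('I_n * 'I_n)%type.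

Definition valid_stream (n : nat) (s : seq (edge n)) : bool :=
  all (fun e => e.1 != e.2) s && uniq [seq [set e.1; e.2] | e <- s].

Definition adj (n : nat) (s : seq (edge n)) (u v : 'I_n) : bool :=
  ((u, v) \in s) || ((v, u) \in s).

Definition cycle_copy (k n : nat) (s : seq (edge n)) (f : 'I_k -> 'I_n) : Prop :=
  injective f /\
  forall i j : 'I_k, val j = (val i).+1 %% k -> adj s (f i) (f j).

Definition contains_cycle (k n : nat) (s : seq (edge n)) : Prop :=
  exists f : 'I_k -> 'I_n, cycle_copy s f.

Definition sub_cycle_correct (k n : nat) (s : seq (edge n))
  (ans : option {set 'I_n}) : Prop :=
  match ans with
  | None => ~ contains_cycle k s
  | Some V => exists f : 'I_k -> 'I_n, cycle_copy s f /\ V = f @: setT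
  end.

Definition memory (S : nat) := {ffun 'I_S -> bool}.

(* A deterministic p-pass streaming algorithm on n-vertex graphs (n is
   known, so everything may depend on n) with S bits of memory: an initial
   memory state, a transition function (which may depend on the pass
   number) processing one stream edge, and an output function applied to
   the memory at the end of the last pass. *)
Record stream_alg (n p S : nat) := StreamAlg {
  sa_init : memory S;
  sa_step : 'I_p -> memory S -> edge n -> memory S;
  sa_out  : memory S -> option {set 'I_n}
}.

Definition run_alg (n p S : nat) (A : stream_alg n p S) (s : seq (edge n))
  : option {set 'I_n} :=
  sa_out A (foldl (fun st (j : 'I_p) => foldl (sa_step A j) st s)
                  (sa_init A) (enum 'I_p)).

Definition solves_sub_cycle (k n p S : nat) (A : stream_alg n p S) : Prop :=
  forall s : seq (edge n), valid_stream s -> sub_cycle_correct k s (run_alg A s).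

Definition Dp_sub_cycle_le (k n p S : nat) : Prop :=
  exists A : stream_alg n p S, solves_sub_cycle k A.

(* With fewer than 2l+2 passes the algorithm stores the whole graph in n^2
   bits.  Otherwise the sources are split into about p/(2l+2) batches of
   g ~ (2l+2)n/p vertices, each handled in 2l+2 passes.  For every source of
   the batch and every vertex u, pass r builds from the edges and level r-1 a
   family of simple paths of r edges ending at u which is representative: for
   every set B of at most 2l-r vertices, if some such path avoids B, a kept one
   does.  A bounded search tree keeps such families of size depending on l
   only, so a batch costs O(g n log n) bits, i.e. O~(n^2/p).  A last pass then
   finds an edge closing a path of 2l edges into a copy of C_(2l+1). *)
From mathcomp Require Import all_boot zify ring.
From Stdlib Require Import FunctionalExtensionality.
Set Implicit Arguments. Unset Strict Implicit. Unset Printing Implicit Defensive.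

Lemma foldl_ind (T : eqType) (R : Type) (f : R -> T -> R) (P : R -> Prop) z s :
  (forall r x, x \in s -> P r -> P (f r x)) -> P z -> P (foldl f z s).
Proof.
elim: s z => //= x s IHs z fP Pz; apply: IHs => [r y ys|]; apply: fP => //.
  by rewrite inE ys orbT.
by rewrite inE eqxx.
Qed.

Section FoldlFacts.
Variables (T R : Type) (f : R -> T -> R).

Lemma foldl_sim (R' : Type) (f' : R' -> T -> R') (h : R -> R') (P : R -> Prop) z s :
  (forall r x, P r -> P (f r x)) -> (forall r x, P r -> h (f r x) = f' (h r) x) ->
  P z -> h (foldl f z s) = foldl f' (h z) s.
Proof.
move=> fP fh; elim: s z => //= x s IHs z Pz.
by rewrite -fh // IHs //; apply: fP.
Qed.

Lemma foldl_map (U : Type) (g : U -> T) z (s : seq U) :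
  foldl f z (map g s) = foldl (fun r x => f r (g x)) z s.
Proof. by elim: s z => //= x s IHs z. Qed.

End FoldlFacts.

Definition run_passes (E St : Type) (step : nat -> St -> E -> St) (init : St)
    (s : seq E) (p : nat) : St :=
  foldl (fun t j => foldl (step j) t s) init (iota 0 p).

Lemma exists_inj_of_leq_card (U V : finType) :
  #|U| <= #|V| -> exists f : U -> V, injective f.
Proof.
move=> leUV; exists (fun u => enum_val (widen_ord leUV (enum_rank u))).
by move=> u v /enum_val_inj /(congr1 val) /= /val_inj /enum_rank_inj.
Qed.

Section Encoding.
Variables (n p S : nat) (St : Type) (U : finType).
Variables (code : St -> U) (decode : U -> St) (Inv : St -> Prop).
Variables (init : St) (step : nat -> St -> edge n -> St) (out : St -> option {set 'I_n}).
Hypothesis codeK : forall t, Inv t -> decode (code t) = t.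
Hypothesis Inv_init : Inv init.
Hypothesis Inv_step : forall j t e, Inv t -> Inv (step j t e).
Hypothesis card_code : #|U| <= 2 ^ S.

Lemma stream_alg_of_code :
  exists A : stream_alg n p S, forall s, run_alg A s = out (run_passes step init s p).
Proof.
have [enc encI] : exists f : U -> memory S, injective f.
  by apply: exists_inj_of_leq_card; rewrite card_ffun card_bool card_ord.
pose dec (m : memory S) := odflt (code init) [pick u | enc u == m].
have decK u : dec (enc u) = u.
  by rewrite /dec; case: pickP => [v /eqP /encI | /(_ u)]; rewrite ?eqxx.
pose mem_of t := enc (code t).
pose mstep j m e := mem_of (step j (decode (dec m)) e).
have mstepE j t e : Inv t -> mem_of (step j t e) = mstep j (mem_of t) e.
  by move=> It; rewrite /mstep /mem_of decK codeK.
exists (StreamAlg (mem_of init) (fun j => mstep (val j)) (fun m => out (decode (dec m)))).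
move=> s; have Inv_pass j t : Inv t -> Inv (foldl (step j) t s).
  by move=> It; apply: foldl_ind => // r e _; apply: Inv_step.
have pass_sim j t : Inv t -> mem_of (foldl (step j) t s) = foldl (mstep j) (mem_of t) s.
  by move=> It; apply: (foldl_sim (P := Inv)) => // r e; [apply: Inv_step | apply: mstepE].
rewrite /run_alg /run_passes /= -val_enum_ord foldl_map.
rewrite -(@foldl_sim _ _ _ _ _ mem_of Inv _ _ (fun t j => Inv_pass (val j) t)
  (fun t j => pass_sim (val j) t)) //.
by rewrite decK codeK //; apply: foldl_ind => // t j _; apply: Inv_pass.
Qed.

End Encoding.

Lemma leq_expn2r m1 m2 e : m1 <= m2 -> m1 ^ e <= m2 ^ e.
Proof. by case: e => // e; rewrite leq_exp2r. Qed.

Lemma card_set_of (T : finType) : #|{: {set T}}| = 2 ^ #|T|.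
Proof. by have := card_powerset [set: T]; rewrite powersetT !cardsT. Qed.

Lemma foldl_setU1 (T : finType) (A : {set T}) (s : seq T) :
  foldl (fun B x => x |: B) A s = A :|: [set x in s].
Proof.
elim: s A => [|x s IHs] A /=; first by apply/setP => y; rewrite !inE orbF.
by rewrite IHs; apply/setP => y; rewrite !inE -orbA orbCA.
Qed.

Section StoreAll.
Variables (k n : nat).

Definition cycleb (E : {set edge n}) (f : {ffun 'I_k -> 'I_n}) : bool :=
  injectiveb f && [forall i, forall j : 'I_k,
    (val j == (val i).+1 %% k) ==> ((f i, f j) \in E) || ((f j, f i) \in E)].

Lemma cyclebP (s : seq (edge n)) (f : {ffun 'I_k -> 'I_n}) :
  reflect (cycle_copy s f) (cycleb [set e in s] f).
Proof.
apply: (iffP andP) => [[/injectiveP f_inj /forallP f_adj] | [f_inj f_adj]].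
  split=> // i j ji; move/forallP: (f_adj i) => /(_ j).
  by rewrite ji eqxx !inE.
split; first exact/injectiveP.
apply/forallP => i; apply/forallP => j; apply/implyP => /eqP ji.
by have := f_adj i j ji; rewrite /adj !inE.
Qed.

Definition store_out (E : {set edge n}) : option {set 'I_n} :=
  omap (fun f : {ffun 'I_k -> 'I_n} => f @: setT) [pick f | cycleb E f].

Lemma store_out_correct (s : seq (edge n)) :
  sub_cycle_correct k s (store_out [set e in s]).
Proof.
rewrite /store_out; case: pickP => [f /cyclebP f_cyc | no_cyc] /=; first by exists f.
case=> f [f_inj f_adj]; have /cyclebP := no_cyc [ffun i => f i]; apply.
by split=> [x y | i j]; rewrite !ffunE; [apply: f_inj | apply: f_adj].
Qed.

Lemma store_all_solves p : 0 < p -> Dp_sub_cycle_le k n p (n * n).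
Proof.
move=> p_gt0; have card_code : #|{: {set edge n}}| <= 2 ^ (n * n).
  by rewrite card_set_of card_prod card_ord.
have [A runA] := @stream_alg_of_code _ p _ _ _ id id (fun _ => True) set0
  (fun _ E e => e |: E) store_out (fun _ _ => erefl) I (fun _ _ _ _ => I) card_code.
exists A => s _; rewrite runA.
suff -> : run_passes (fun _ E e => e |: E) set0 s p = [set e in s] by apply: store_out_correct.
rewrite /run_passes; case: {A runA}p p_gt0 => // p _ /=; rewrite foldl_setU1 set0U.
by elim: (iota 1 p) => //= j js; rewrite foldl_setU1 setUid.
Qed.

End StoreAll.

Section Representatives.
Variable T : finType.

Definition avoids (B : {set T}) (P : seq T) : bool := all (fun x => x \notin B) P.

Lemma avoids_rcons (B : {set T}) P x : avoids B (rcons P x) = avoids B P && (x \notin B).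
Proof. by rewrite /avoids all_rcons andbC. Qed.

Fixpoint rep (q : nat) (F : seq (seq T)) : seq (seq T) :=
  match q, F with
  | 0, _ => take 1 F
  | q'.+1, [::] => [::]
  | q'.+1, A :: _ => A :: flatten [seq rep q' [seq P <- F | x \notin P] | x <- A]
  end.

Fixpoint rep_bound (m q : nat) : nat := if q is q'.+1 then (m * rep_bound m q').+1 else 1.

Lemma rep_bound_gt0 m q : 0 < rep_bound m q.
Proof. by case: q. Qed.

Lemma rep_subset q F : {subset rep q F <= F}.
Proof.
elim: q F => [|q IHq] F P /=; first exact: mem_take.
case: F => [|A F] //; rewrite inE => /orP [/eqP -> | /flatten_mapP [x _ /IHq]].
  by rewrite inE eqxx.
by rewrite mem_filter => /andP [].
Qed.

Lemma size_rep m q F : (forall P, P \in F -> size P <= m) -> size (rep q F) <= rep_bound m q.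
Proof.
elim: q F => [|q IHq] F sizeF /=; first by rewrite size_take; case: (size F) => [|[]].
have branches_size (X : seq T) : sumn (shape [seq rep q [seq P <- F | x \notin P] | x <- X])
    <= size X * rep_bound m q.
  elim: X => //= x X IHX; rewrite mulSn leq_add // IHq // => P.
  by rewrite mem_filter => /andP [_ /sizeF].
case: F sizeF branches_size => [|A F] sizeF branches_size //=.
rewrite ltnS size_flatten; apply: leq_trans (branches_size A) _.
by rewrite leq_mul2r sizeF ?orbT // inE eqxx.
Qed.

(* A member avoiding B is either the head A of F or avoids some x in A :&: B;
   in the latter case it is found by the branch of x, which only has to
   handle the smaller set B :\ x. *)
Lemma rep_avoids q F (B : {set T}) : #|B| <= q ->
  (exists2 P, P \in F & avoids B P) -> exists2 P, P \in rep q F & avoids B P.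
Proof.
elim: q F B => [|q IHq] F B cardB [P PF avP].
  case: F PF => [|A F] // _; exists A; first by rewrite /= inE eqxx.
  by move: cardB; rewrite leqn0 cards_eq0 => /eqP ->; apply/allP => x; rewrite inE.
case: F PF => [|A F] // PF.
have [avA | /allPn [x xA /negPn xB]] := boolP (avoids B A).
  by exists A; rewrite //= inE eqxx.
have xP : x \notin P by apply: contraL xB => /(allP avP).
have cardBx : #|B :\ x| <= q by move: cardB; rewrite (cardsD1 x B) xB.
have avPx : avoids (B :\ x) P.
  by apply/allP => y yP; rewrite !inE negb_and (allP avP y yP) orbT.
have [|P' P'_rep avP'] := IHq [seq P <- A :: F | x \notin P] _ cardBx.
  by exists P; rewrite ?mem_filter ?xP.
exists P'; first by rewrite /= inE; apply/orP; right; apply/flatten_mapP; exists x.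
have xP' : x \notin P' by move/rep_subset: P'_rep; rewrite mem_filter => /andP [].
apply/allP => y yP'; have yx : y != x by apply: contraNneq xP' => <-.
by move/allP: avP' => /(_ y yP'); rewrite !inE yx.
Qed.

End Representatives.

Section Padding.
Variable X : Type.

Lemma pad_subproof m (s : seq X) : size (take m (map Some s ++ nseq m None)) == m.
Proof. by rewrite size_takel // size_cat size_nseq leq_addl. Qed.

Definition pad m (s : seq X) : m.-tuple (option X) := Tuple (pad_subproof m s).

Lemma padK m (s : seq X) : size s <= m -> pmap id (pad m s) = s.
Proof.
move=> size_s; rewrite /= take_cat size_map ltnNge size_s /= pmap_cat.
rewrite (map_pK (g := Some) (f := id)) // take_nseq ?leq_subr //.
by elim: (m - size s) => //; rewrite cats0.
Qed.

End Padding.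

Section Paths.
Variables (n : nat) (s : seq (edge n)).

Lemma adj_sym : symmetric (adj s).
Proof. by move=> x y; rewrite /adj orbC. Qed.

Lemma adj_sub (l : seq (edge n)) x y : {subset l <= s} -> adj l x y -> adj s x y.
Proof. by move=> ls /orP [/ls | /ls] xy; rewrite /adj xy ?orbT. Qed.

Lemma adj_rcons (l : seq (edge n)) e x y : adj (rcons l e) x y = adj l x y || adj [:: e] x y.
Proof. by rewrite /adj !mem_rcons !inE orbACA orbC. Qed.

Definition simple_path (r : nat) (u : 'I_n) (P : seq 'I_n) : bool :=
  if P is v :: P' then [&& path (adj s) v P', uniq P, last v P' == u & size P' == r] else false.

Lemma simple_path_rcons r x y P :
  simple_path r x P -> y \notin P -> adj s x y -> simple_path r.+1 y (rcons P y).
Proof.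
case: P => [|v P] //= /and4P [vP /andP [vP' uniqP] /eqP <- /eqP <-].
rewrite inE negb_or => /andP [yv yP] xy.
by rewrite rcons_path vP xy mem_rcons inE negb_or eq_sym yv vP' rcons_uniq yP uniqP
  last_rcons size_rcons !eqxx.
Qed.

Lemma simple_pathS r u P : simple_path r.+1 u P ->
  exists P0 a, [/\ P = rcons P0 u, simple_path r a P0, u \notin P0 & adj s a u].
Proof.
case: P => [|v P] //=; case/lastP: P => [|P w] /and4P [] //.
rewrite rcons_path last_rcons size_rcons rcons_uniq mem_rcons inE negb_or.
move=> /andP [vP aw] /andP [/andP [vw vP'] /andP [wP uniqP]] /eqP <- /eqP [sizeP].
exists (v :: P), (last v P).
by rewrite /= vP vP' uniqP sizeP inE negb_or eq_sym vw wP !eqxx.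
Qed.

Lemma simple_path_mkseq r (f : 'I_r.+1 -> 'I_n) : cycle_copy s f ->
  forall m, m <= r -> simple_path m (f (inord m)) (mkseq (fun i => f (inord i)) m.+1).
Proof.
move=> [f_inj f_adj]; elim=> [|m IHm] lt_m; first by rewrite /= eqxx.
rewrite mkseqS; apply: simple_path_rcons; first exact/IHm/ltnW.
  have: uniq (mkseq (fun i => f (inord i)) m.+2).
    apply/mkseq_uniqP => i j; rewrite !inE => lt_i lt_j /f_inj /(congr1 val).
    by rewrite /= !inordK // (leq_trans lt_i, leq_trans lt_j).
  by rewrite mkseqS rcons_uniq => /andP [].
by apply: f_adj; rewrite /= !inordK ?modn_small // ltnS ?(ltnW lt_m).
Qed.

Lemma cycle_of_simple_path r x P : simple_path r x P -> adj s x (head x P) ->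
  exists f : 'I_r.+1 -> 'I_n, cycle_copy s f /\ [set z in P] = f @: setT.
Proof.
case: P => [|v P] //= /and4P [vP uniqP /eqP lastP /eqP sizeP] xv.
exists (fun i => nth x (v :: P) i); split; last first.
  apply/setP => z; rewrite inE; apply/idP/imsetP => [zP | [i _ ->]].
    exists (inord (index z (v :: P))) => //.
    by rewrite inordK ?nth_index // -sizeP -[(size P).+1]/(size (v :: P)) index_mem.
  by rewrite mem_nth //= sizeP.
split=> [i j /eqP | i j ji].
  by rewrite nth_uniq //= ?sizeP // => /eqP /val_inj.
have [lt_ir | ge_ir] := ltnP i r.
  move: ji; rewrite modn_small ?ltnS // => ->.
  by move/(pathP x): vP => /(_ i); rewrite sizeP; apply.
have ir : nat_of_ord i = r by apply/eqP; rewrite eqn_leq ge_ir andbT -ltnS ltn_ord.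
move: ji => /= ->; rewrite ir modnn -sizeP -[size P]/((size (v :: P)).-1) nth_last /=.
by rewrite lastP.
Qed.

End Paths.

Section Batched.
Variables (n k' g' : nat).
Local Notation k := k'.+1.
Local Notation g := g'.+1.
Local Notation K := k.+1.
Local Notation families := ('I_g -> 'I_n -> seq (seq 'I_n)).

(* The sources are processed in batches of g: pass j serves batch j %/ K in
   phase j %% K.  Source v belongs to batch v %/ g, where it owns slot v %% g;
   levels r i u holds paths of r edges (as vertex lists) from the source of
   slot i to u.  Phase 0 seeds level 0, phase r in 1..k' builds level r from
   level r.-1 and the edges, phase k looks for an edge closing a path of
   level k' into a cycle. *)
Record state := State { levels : nat -> families; answer : option {set 'I_n} }.

Definition in_slot (b : nat) (i : 'I_g) (v : 'I_n) : bool := (v %/ g == b) && (v %% g == i).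

Lemma in_slot_eq b i v w : in_slot b i v -> in_slot b i w -> v = w.
Proof.
case/andP=> /eqP vb /eqP vi /andP [/eqP wb /eqP wi]; apply: val_inj => /=.
by rewrite (divn_eq v g) (divn_eq w g) vb vi wb wi.
Qed.

Definition seeds (b : nat) : families := fun i u => if in_slot b i u then [:: [:: u]] else [::].

Definition extend (L : 'I_n -> seq (seq 'I_n)) (a w : 'I_n) : seq (seq 'I_n) :=
  [seq rcons P w | P <- L a & w \notin P].

Definition edge_candidates (L1 L : families) (e : edge n) (i : 'I_g) (w : 'I_n) :=
  L i w ++ (if w == e.2 then extend (L1 i) e.1 w else [::])
        ++ (if w == e.1 then extend (L1 i) e.2 w else [::]).

Definition extend_edge (L1 L : families) (e : edge n) : families := fun i w =>
  rep k (edge_candidates L1 L e i w).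

Definition cycle_sets (t : state) (x y : 'I_n) : seq {set 'I_n} :=
  [seq [set z in P] | P <- flatten [seq levels t k' i x | i <- enum 'I_g] & head x P == y].

Definition closing (t : state) (e : edge n) : option {set 'I_n} :=
  ohead (cycle_sets t e.1 e.2 ++ cycle_sets t e.2 e.1).

Definition step (j : nat) (t : state) (e : edge n) : state :=
  let b := j %/ K in let ph := j %% K in
  if ph == 0 then State (fun r => if r == 0 then seeds b else fun _ _ => [::]) (answer t)
  else if ph < k then
    State (fun r => if r == ph then extend_edge (levels t ph.-1) (levels t ph) e
                    else levels t r) (answer t)
  else State (levels t) (if answer t is Some V then Some V else closing t e).

Definition init : state := State (fun _ _ _ => [::]) None.

Lemma mem_edge_candidates L1 L e i w P : P \in edge_candidates L1 L e i w ->
  P \in L i w \/ exists a Q, [/\ adj [:: e] a w, Q \in L1 i a, w \notin Q & P = rcons Q w].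
Proof.
rewrite !mem_cat => /or3P [|PL|PL]; [by left | right..].
- case: (w =P e.2) PL => [-> | //] /mapP [Q]; rewrite mem_filter => /andP [wQ QL] ->.
  by exists e.1, Q; rewrite /adj -surjective_pairing !inE eqxx.
- case: (w =P e.1) PL => [-> | //] /mapP [Q]; rewrite mem_filter => /andP [wQ QL] ->.
  by exists e.2, Q; rewrite /adj -surjective_pairing !inE eqxx orbT.
Qed.

Definition sized (L : families) (m : nat) := forall i u P, P \in L i u -> size P <= m.

Lemma sized_edge_candidates L1 L e m : sized L1 m -> sized L m.+1 ->
  forall i w P, P \in edge_candidates L1 L e i w -> size P <= m.+1.
Proof.
move=> L1m Lm i w P /mem_edge_candidates [/Lm // | [a [Q [_ /L1m QL1 _ ->]]]].
by rewrite size_rcons.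
Qed.

Definition bounded (t : state) := forall r, [/\ sized (levels t r) r.+1,
  forall i u, size (levels t r i u) <= rep_bound k k & k <= r -> forall i u, levels t r i u = [::]].

Lemma bounded_init : bounded init.
Proof. by move=> r; split=> // i u; apply: rep_bound_gt0. Qed.

Lemma bounded_step j t e : bounded t -> bounded (step j t e).
Proof.
move=> bt r; rewrite /step; have [ph0 | ph_gt0] := eqVneq (j %% K) 0 => /=.
  case: (r =P 0) => [-> | _]; last by split.
  split=> // i u; rewrite /seeds; case: in_slot => // P.
  by rewrite inE => /eqP ->.
have [ph_lt | _] := ltnP (j %% K) k => /=; last exact: bt.
case: (r =P j %% K) => [-> | _]; last exact: bt.
have [Lm _ _] := bt (j %% K).-1; have [Lm1 _ _] := bt (j %% K).
rewrite prednK ?lt0n // in Lm.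
have cand := sized_edge_candidates (e := e) Lm Lm1.
split=> [i u P /rep_subset /cand // | i u | ]; last by rewrite leqNgt ph_lt.
by apply: size_rep => P /cand /leq_trans; apply.
Qed.

Definition code_type := ({ffun 'I_k * 'I_g * 'I_n ->
  (rep_bound k k).-tuple (option (k.-tuple (option 'I_n)))} * option {set 'I_n})%type.

Definition code (t : state) : code_type :=
  ([ffun x : 'I_k * 'I_g * 'I_n => pad _ [seq pad k P | P <- levels t x.1.1 x.1.2 x.2]],
   answer t).

Definition decode (c : code_type) : state :=
  State (fun r i u => if r < k
    then [seq pmap id (tval P) | P <- pmap id (tval (c.1 (inord r, i, u)))] else [::]) c.2.

Lemma codeK t : bounded t -> decode (code t) = t.
Proof.
case: t => L a bt; rewrite /decode /code /=; congr State.
apply: functional_extensionality => r; apply: functional_extensionality => i.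
apply: functional_extensionality => u; have /= [Lr size_Lr Lr_nil] := bt r.
case: ltnP => [r_lt | /Lr_nil -> //]; rewrite ffunE /= inordK // padK ?size_map //.
rewrite -map_comp -[RHS]map_id; apply/eq_in_map => P /Lr size_P /=.
by rewrite padK // (leq_trans size_P).
Qed.

Definition space : nat :=
  k * g * n * (rep_bound k k * (k * (trunc_log 2 n).+1 + 1)) + n.+1.

Lemma card_path_code : #|{: option (k.-tuple (option 'I_n))}| <= 2 ^ (k * (trunc_log 2 n).+1 + 1).
Proof.
rewrite card_option card_tuple card_option card_ord expnD expn1 muln2 -addnn.
have n_lt : n.+1 <= 2 ^ (trunc_log 2 n).+1 by apply: trunc_log_ltn.
have : n.+1 ^ k <= 2 ^ (k * (trunc_log 2 n).+1) by rewrite mulnC expnM leq_expn2r.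
by have := expn_gt0 n.+1 k; lia.
Qed.

Lemma card_code_type : #|{: code_type}| <= 2 ^ space.
Proof.
rewrite card_prod card_ffun !card_prod !card_ord card_tuple /space expnD; apply: leq_mul.
  rewrite -!expnM; apply: leq_trans (leq_expn2r _ card_path_code) _.
  by rewrite -expnM leq_exp2l //; apply: eq_leq; ring.
by rewrite card_option card_set_of card_ord expnS; have := expn_gt0 2 n; lia.
Qed.

Lemma batched_stream_alg p : exists A : stream_alg n p space,
  forall s, run_alg A s = answer (run_passes step init s p).
Proof. exact: stream_alg_of_code codeK bounded_init bounded_step card_code_type. Qed.

Section Soundness.
Variable s : seq (edge n).

Definition simple_family (L : families) (r : nat) :=
  forall i u P, P \in L i u -> simple_path s r u P.

Definition sound (t : state) := (forall r, simple_family (levels t r) r) /\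
  (forall V, answer t = Some V -> sub_cycle_correct k s (Some V)).

Lemma simple_extend_edge L1 L e m : e \in s -> simple_family L1 m -> simple_family L m.+1 ->
  simple_family (extend_edge L1 L e) m.+1.
Proof.
move=> es L1m Lm i w P /rep_subset /mem_edge_candidates [/Lm // | [a [Q [aw /L1m Qa wQ ->]]]].
by apply: simple_path_rcons Qa wQ _; apply: adj_sub aw => x; rewrite inE => /eqP ->.
Qed.

Lemma cycle_sets_sound t x y V : simple_family (levels t k') k' -> adj s x y ->
  V \in cycle_sets t x y -> sub_cycle_correct k s (Some V).
Proof.
move=> Lk xy /mapP [P]; rewrite mem_filter => /andP [/eqP Py /flatten_mapP [i _ /Lk PL]] ->.
by apply: cycle_of_simple_path PL _; rewrite Py.
Qed.

Lemma sound_step j t e : e \in s -> sound t -> sound (step j t e).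
Proof.
move=> es [Lt At]; rewrite /step; have [ph0 | ph_gt0] := eqVneq (j %% K) 0 => /=.
  split=> // r i u P /=; case: (r =P 0) => [-> | //]; rewrite /seeds.
  by case: in_slot; rewrite // inE => /eqP ->; rewrite /= eqxx.
have [ph_lt | _] := ltnP (j %% K) k => /=.
  split=> // r /=; case: (r =P j %% K) => [-> | _]; last exact: Lt.
  move: (Lt (j %% K).-1) (Lt (j %% K)); case: (j %% K) ph_gt0 => // m _.
  exact: simple_extend_edge.
split=> // V; case: (answer t) At => [W /(_ W erefl) W_ok [<-] // | _ close_e].
have exy : adj s e.1 e.2 by rewrite /adj -surjective_pairing es.
have : V \in cycle_sets t e.1 e.2 ++ cycle_sets t e.2 e.1.
  by move: close_e; rewrite /closing; case: (_ ++ _) => //= W ws [<-]; rewrite mem_head.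
rewrite mem_cat => /orP [] V_in; apply: cycle_sets_sound V_in => //.
by rewrite adj_sym.
Qed.

Lemma sound_run p : sound (run_passes step init s p).
Proof.
apply: foldl_ind => [t j _ sound_t|]; last by split.
by apply: foldl_ind => // t' e es; apply: sound_step.
Qed.

End Soundness.

Section Completeness.
Variable s : seq (edge n).

Definition head_in_slot (b : nat) (i : 'I_g) (P : seq 'I_n) : bool :=
  if P is v :: _ then in_slot b i v else false.

Definition rooted (L : families) (b : nat) := forall i u P, P \in L i u -> head_in_slot b i P.

(* B stands for the vertices that the remaining k' - r extensions of P must not revisit. *)
Definition representative (L : families) (r b : nat) := forall i u P (B : {set 'I_n}),
  simple_path s r u P -> head_in_slot b i P -> #|B| + r < k -> avoids B P ->
  exists2 P', P' \in L i u & avoids B P'.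

(* Invariant of the pass building level m.+1: paths whose last edge has
   already been read (lies in l) are represented in L. *)
Definition covers (L : families) (m b : nat) (l : seq (edge n)) := forall i a w P (B : {set 'I_n}),
  simple_path s m a P -> head_in_slot b i P -> w \notin P -> adj l a w ->
  #|B| + m.+1 < k -> avoids B (rcons P w) -> exists2 P', P' \in L i w & avoids B P'.

Lemma mem_extend (L : 'I_n -> seq (seq 'I_n)) a w Q :
  Q \in L a -> w \notin Q -> rcons Q w \in extend L a w.
Proof. by move=> QL wQ; apply/mapP; exists Q; rewrite // mem_filter wQ. Qed.

Lemma extend_edge_keeps L1 L e i w P (B : {set 'I_n}) : #|B| <= k ->
  P \in L i w -> avoids B P -> exists2 P', P' \in extend_edge L1 L e i w & avoids B P'.
Proof. by move=> cardB PL avP; apply: rep_avoids cardB _; exists P; rewrite ?mem_cat ?PL. Qed.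

Lemma extend_edge_adds L1 L e i a w Q (B : {set 'I_n}) : #|B| <= k -> adj [:: e] a w ->
  Q \in L1 i a -> w \notin Q -> avoids B (rcons Q w) ->
  exists2 P', P' \in extend_edge L1 L e i w & avoids B P'.
Proof.
move=> cardB aw QL wQ avQ; apply: rep_avoids cardB _; exists (rcons Q w) => //.
have Qw := mem_extend QL wQ; rewrite !mem_cat.
by case/orP: aw; rewrite inE => /eqP <-; rewrite /= eqxx Qw ?orbT.
Qed.

Lemma covers_step L1 L m b l e : representative L1 m b -> covers L m b l ->
  covers (extend_edge L1 L e) m b (rcons l e).
Proof.
move=> L1rep Lcov i a w P B Pa Pb wP aw cardB; rewrite avoids_rcons => /andP [avP wB].
have cardB' : #|B| <= k by lia.
move: aw; rewrite adj_rcons => /orP [aw | e_aw].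
  have [|P' P'L avP'] := Lcov i a w P B Pa Pb wP aw cardB; first by rewrite avoids_rcons avP.
  exact: extend_edge_keeps P'L avP'.
have [||Q QL avQ] := L1rep i a P (w |: B) Pa Pb.
- by rewrite cardsU1 wB; lia.
- by apply/allP => x xP; rewrite !inE negb_or (allP avP x xP) andbT; apply: contraNneq wP => <-.
have wQ : w \notin Q by apply: contraL (allP avQ w) _; rewrite !inE eqxx.
apply: extend_edge_adds e_aw QL wQ _ => //.
rewrite avoids_rcons wB andbT; apply/allP => x /(allP avQ).
by rewrite !inE negb_or => /andP [].
Qed.

Lemma covers_foldl L1 L m b l l' : representative L1 m b -> covers L m b l ->
  covers (foldl (extend_edge L1) L l') m b (l ++ l').
Proof.
move=> L1rep; elim: l' L l => [|e l' IHl'] L l Lcov /=; first by rewrite cats0.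
by rewrite -cat_rcons; apply/IHl'/covers_step.
Qed.

Lemma representative_of_covers L m b : covers L m b s -> representative L m.+1 b.
Proof.
move=> Lcov i u P B /simple_pathS [P0 [a [-> P0a uP0 au]]] Pb cardB.
have P0b : head_in_slot b i P0 by case: P0 P0a Pb {uP0 Lcov}.
exact: Lcov P0a P0b uP0 au _.
Qed.

Lemma rooted_extend_edge L1 L e b : rooted L1 b -> rooted L b -> rooted (extend_edge L1 L e) b.
Proof.
move=> L1b Lb i w P /rep_subset /mem_edge_candidates [/Lb // | [a [Q [_ /L1b Qb _ ->]]]].
by case: Q Qb.
Qed.

Lemma representative_seeds b : representative (seeds b) 0 b.
Proof.
move=> i u [|v [|w P]] B //=; last by rewrite !andbF.
case/andP => /eqP <- _ vb _ avP.
by exists [:: v]; rewrite // /seeds vb inE.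
Qed.

Lemma rooted_seeds b : rooted (seeds b) b.
Proof. by move=> i u P; rewrite /seeds; case: ifP => // ub; rewrite inE => /eqP ->. Qed.

Definition pass (j : nat) (t : state) : state := foldl (step j) t s.

Definition passes (t : state) (js : seq nat) : state := foldl (fun t j => pass j t) t js.

Lemma levels_seed_pass j t : s != [::] -> j %% K = 0 ->
  levels (pass j t) = fun r => if r == 0 then seeds (j %/ K) else fun _ _ => [::].
Proof.
rewrite /pass; case: s => // e l _ ph0 /=.
by apply: (foldl_ind (P := fun t => levels t = _)) => [t' e' _ _|]; rewrite /step ph0.
Qed.

Lemma levels_extend_pass j t r : 0 < j %% K < k ->
  levels (pass j t) r = if r == j %% K
    then foldl (extend_edge (levels t (j %% K).-1)) (levels t (j %% K)) s else levels t r.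
Proof.
case/andP=> ph_gt0 ph_lt; rewrite /pass; elim: s t => [|e l IHl] t /=.
  by case: eqP => // ->.
have step_levels r' : levels (step j t e) r' =
    if r' == j %% K then extend_edge (levels t (j %% K).-1) (levels t (j %% K)) e else levels t r'.
  by rewrite /step eqn0Ngt ph_gt0 ph_lt.
have pred_neq : ((j %% K).-1 == j %% K) = false by apply/eqP; lia.
by rewrite IHl !step_levels eqxx pred_neq; case: eqP.
Qed.

Lemma levels_close_foldl j t l : k <= j %% K -> levels (foldl (step j) t l) = levels t.
Proof.
move=> ph_ge; have ph0 : (j %% K == 0) = false by apply/eqP; lia.
apply: (foldl_ind (P := fun t' => levels t' = levels t)) => // t' e _ <-.
by rewrite /step ph0 ltnNge ph_ge.
Qed.

Lemma answer_step_mono j t e : answer t != None -> answer (step j t e) != None.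
Proof. by rewrite /step; case: (_ == 0) => //; case: (_ < k) => //=; case: (answer t). Qed.

Lemma answer_passes_mono t js : answer t != None -> answer (passes t js) != None.
Proof.
pose answered t := answer t != None.
apply: (foldl_ind (P := answered)) => t' j _ At'.
by apply: (foldl_ind (P := answered)) At' => t'' e _; apply: answer_step_mono.
Qed.

Lemma answer_close_pass j t e : k <= j %% K -> e \in s -> closing t e != None ->
  answer (pass j t) != None.
Proof.
move=> ph_ge es close_e; have ph0 : (j %% K == 0) = false by apply/eqP; lia.
rewrite /pass; case/splitPr: es => s1 s2; rewrite foldl_cat /=.
set t1 := foldl (step j) t s1.
have close_t1 : closing t1 e = closing t e by rewrite /closing /cycle_sets levels_close_foldl.
apply: (foldl_ind (P := fun t => answer t != None)) => [t' e' _|]; first exact: answer_step_mono.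
by rewrite /step ph0 ltnNge ph_ge /=; case: (answer t1) => //; rewrite close_t1.
Qed.

Lemma passes_iotaS t i m : passes t (iota i m.+1) = pass (i + m) (passes t (iota i m)).
Proof. by rewrite -addn1 iotaD /passes foldl_cat. Qed.

Lemma batch_invariant t b m : s != [::] -> m <= k' ->
  let t' := passes t (iota (b * K) m.+1) in
  [/\ representative (levels t' m) m b, rooted (levels t' m) b
    & forall r, m < r -> levels t' r = fun _ _ => [::]].
Proof.
move=> s_nil; elim: m => [|m IHm] le_m.
  rewrite /passes /= levels_seed_pass ?modnMl ?mulnK //=.
  split=> [|| [|r]] //; [apply: representative_seeds | apply: rooted_seeds].
have [rep_m root_m empty_m] := IHm (ltnW le_m).
rewrite passes_iotaS; set t' := passes t _.
have ph : 0 < (b * K + m.+1) %% K < k by rewrite modnMDl modn_small //; lia.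
have lv r := levels_extend_pass t' r ph; rewrite modnMDl modn_small /= in lv; last lia.
rewrite [let _ := _ in _]/= !lv eqxx (empty_m m.+1) //; split.
- by apply: representative_of_covers; apply: (covers_foldl (l := [::])).
- by apply: (foldl_ind (P := rooted^~ b)) => // L e _ L_b; apply: rooted_extend_edge.
- by move=> r lt_r; rewrite lv ifN_eq ?empty_m //; lia.
Qed.

Lemma closing_of_path t e i x P : adj [:: e] x (head x P) -> P \in levels t k' i x ->
  closing t e != None.
Proof.
move=> xy PL; have P_set y : head x P = y -> [set z in P] \in cycle_sets t x y.
  move=> Py; apply/mapP; exists P => //; rewrite mem_filter Py eqxx.
  by apply/flatten_mapP; exists i; rewrite ?mem_enum.
have ohead_mem (l : seq {set 'I_n}) V : V \in l -> ohead l != None by case: l.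
rewrite /closing; case/orP: xy; rewrite inE => /eqP <-; apply: (ohead_mem _ [set z in P]);
  by rewrite mem_cat P_set ?orbT.
Qed.

Lemma adj_edge x y : adj s x y -> exists2 e, e \in s & adj [:: e] x y.
Proof. by case/orP=> xy; [exists (x, y) | exists (y, x)]; rewrite // /adj !inE eqxx ?orbT. Qed.

Lemma batch_detects_cycle t (f : 'I_k -> 'I_n) : cycle_copy s f ->
  answer (passes t (iota ((f ord0 %/ g) * K) K)) != None.
Proof.
move=> f_cyc; set b := f ord0 %/ g; set i : 'I_g := inord (f ord0 %% g).
have f0 : f (inord 0) = f ord0 by congr f; apply: val_inj; rewrite /= inordK.
have [e es e_adj] : exists2 e, e \in s & adj [:: e] (f (inord k')) (f ord0).
  by apply/adj_edge/f_cyc.2; rewrite /= inordK // modnn.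
have s_nil : s != [::] by case: (s) es.
have [rep_k root_k _] := batch_invariant t b s_nil (leqnn k').
have f0b : in_slot b i (f ord0) by rewrite /in_slot eqxx inordK ?ltn_mod ?eqxx.
have [|||P' P'L _] := rep_k i _ _ set0 (simple_path_mkseq f_cyc (leqnn k')).
- by rewrite /= f0.
- by rewrite cards0.
- by apply/allP => x _; rewrite in_set0.
rewrite passes_iotaS; apply: answer_close_pass es _; first by rewrite modnMDl modn_small.
have := root_k _ _ _ P'L; case: P' P'L => // v P' P'L /= /in_slot_eq/(_ f0b) vf0.
by apply: (closing_of_path _ P'L); rewrite /= vf0.
Qed.

Lemma batched_complete m p : n <= g * m -> m * K <= p -> contains_cycle k s ->
  answer (run_passes step init s p) != None.
Proof.
move=> n_le p_ge [f f_cyc]; set b := f ord0 %/ g.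
have b_lt : b < m by rewrite ltn_divLR // (leq_trans (ltn_ord _)) // mulnC.
rewrite /run_passes.
have -> : iota 0 p = iota 0 (b * K) ++ iota (b * K) K ++ iota (b * K + K) (p - (b * K + K)).
  by rewrite -!iotaD; congr iota; nia.
rewrite !foldl_cat; apply: answer_passes_mono; exact: batch_detects_cycle.
Qed.

End Completeness.

Lemma batched_solves m p : n <= g * m -> m * K <= p -> Dp_sub_cycle_le k n p space.
Proof.
move=> n_le p_ge; have [A runA] := batched_stream_alg p; exists A => s _.
rewrite /sub_cycle_correct runA; case E: answer => [V|].
  by have [_] := sound_run s p; apply.
by move/(batched_complete n_le p_ge); rewrite E.
Qed.

End Batched.

Lemma batch_count_bound n K p : 0 < p %/ K -> (n %/ (p %/ K)).+1 * p <= 2 * K * (n + p).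
Proof.
move=> m_gt0; set m := p %/ K.
have K_gt0 : 0 < K by case: (K) m_gt0; rewrite // /m divn0.
have p_le : p <= 2 * m * K.
  have : K <= m * K by rewrite leq_pmull.
  have : p < m.+1 * K := ltn_ceil p K_gt0.
  by rewrite mulSn -mulnA; lia.
apply: leq_trans (leq_mul (leqnn _) p_le) _.
have : n %/ m * m <= n := leq_trunc_div n m.
have : m <= p := leq_div p K.
nia.
Qed.

Lemma batched_space_bound n k' C p : 0 < n -> k'.+2 <= p -> p <= C * n ->
  space n k' (n %/ (p %/ k'.+2)) * p <=
  (2 * k'.+1 * k'.+2 ^ 2 * rep_bound k'.+1 k'.+1 * C.+1 + 2 * C) * n ^ 2 * (trunc_log 2 n).+1.
Proof.
move=> n_gt0 K_le p_le; rewrite /space.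
set k := k'.+1; set K := k'.+2; set F := rep_bound k k; set L := (trunc_log 2 n).+1.
set g := (n %/ (p %/ K)).+1.
have gp : g * p <= 2 * K * (C.+1 * n).
  apply: leq_trans (batch_count_bound _ _) _; first by rewrite divn_gt0.
  by rewrite leq_mul2l mulSn leq_add2l p_le orbT.
have kL : k * L + 1 <= K * L by rewrite [K * L]mulSn addnC leq_add2r.
have bound1 : k * n * F * (k * L + 1) * (g * p) <= 2 * k * K ^ 2 * F * C.+1 * n ^ 2 * L.
  apply: leq_trans (leq_mul (leq_mul (leqnn (k * n * F)) kL) gp) _.
  by apply: eq_leq; ring.
have bound2 : n.+1 * p <= 2 * C * n ^ 2 * L.
  apply: leq_trans (leq_mul (_ : n.+1 <= 2 * n) p_le) _; first lia.
  have -> : 2 * n * (C * n) = 2 * C * n ^ 2 * 1 by ring.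
  by rewrite leq_mul2l /L orbT.
have -> : (k * g * n * (F * (k * L + 1)) + n.+1) * p =
  k * n * F * (k * L + 1) * (g * p) + n.+1 * p by ring.
by apply: leq_trans (leq_add bound1 bound2) _; apply: eq_leq; ring.
Qed.

Theorem proposition15 (l : nat) (hl : 1 <= l) (p : nat -> nat)
  (hp_pos : forall n, 0 < p n)
  (hp_lin : exists C N0, forall n, N0 <= n -> p n <= C * n) :
  exists c k N, forall n, N <= n ->
    exists S, S * p n <= c * n ^ 2 * (trunc_log 2 n).+1 ^ k /\
              Dp_sub_cycle_le (2 * l).+1 n (p n) S.
Proof.
case: hp_lin => C [N0 p_lin]; set k' := 2 * l.
set c_batched := 2 * k'.+1 * k'.+2 ^ 2 * rep_bound k'.+1 k'.+1 * C.+1 + 2 * C.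
exists (k'.+2 + c_batched), 1, (maxn N0 1) => n; rewrite geq_max expn1 => /andP [N0_le n_gt0].
have c_ge c : c <= k'.+2 + c_batched -> c * n ^ 2 * (trunc_log 2 n).+1 <=
    (k'.+2 + c_batched) * n ^ 2 * (trunc_log 2 n).+1.
  by move=> c_le; rewrite !leq_mul2r c_le !orbT.
have [p_lt | p_ge] := ltnP (p n) k'.+2.
  exists (n * n); split; last exact: store_all_solves.
  apply: leq_trans (c_ge _ (leq_addr _ _)); rewrite mulnC -mulnn.
  apply: leq_trans (leq_pmulr _ (ltn0Sn _)) _.
  exact: leq_mul (leq_mul (ltnW p_lt) (leqnn _)) (leqnn _).
exists (space n k' (n %/ (p n %/ k'.+2))); split.
  exact: leq_trans (batched_space_bound n_gt0 p_ge (p_lin n N0_le)) (c_ge _ (leq_addl _ _)).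
apply: batched_solves (leq_trunc_div _ _).
by rewrite ltnW // ltn_ceil // divn_gt0.
Qed.
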